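(* Let $a,b,n$ be positive integers with $b\ge a$ and $n\ge 3b(b+1)/a+3b+7$. Let $k=\left\lceil\frac{2b^2+2b}{a}\right\rceil+2b-4$. Then $$\rho\big(K_{k}\nabla(K_2\cup K_{n-k-2})\big)<n-2\quad\text{and}\quad \rho\big(K_{4b}\nabla(K_2\cup K_{n-4b-2})\big)<n-2.$$
   Context: $\rho(G)$ denotes the spectral radius (largest eigenvalue of the adjacency matrix) of a graph $G$. For graphs $G_1,G_2$, the join $G_1\nabla G_2$ is obtained from the disjoint union $G_1\cup G_2$ by adding all edges between $V(G_1)$ and $V(G_2)$; $K_m$ is the complete graph on $m$ vertices. *)

From HB Require Import structures.
From mathcomp Require Import all_boot all_order all_algebra.
From mathcomp Require Import classical_sets boolp reals.
Set Implicit Arguments. Unset Strict Implicit. Unset Printing Implicit Defensive.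
Import Order.TTheory GRing.Theory Num.Theory.
Local Open Scope ring_scope.
Local Open Scope classical_set_scope.

(* A simple graph is given by a vertex finType T and an adjacency relation
   e : rel T (symmetric, irreflexive for all graphs built below). *)

Definition complete_graph (m : nat) : rel 'I_m := fun i j => i != j.

Arguments complete_graph m : clear implicits.

Definition graph_union (T U : finType) (e : rel T) (f : rel U) : rel (T + U)%type :=
  fun x y => match x, y with
             | inl a, inl b => e a b
             | inr a, inr b => f a b
             | _, _ => false
             end.

Definition graph_join (T U : finType) (e : rel T) (f : rel U) : rel (T + U)%type :=
  fun x y => match x, y with
             | inl a, inl b => e a b
             | inr a, inr b => f a b
             | _, _ => true
             end.

Definition adj_mx (R : realType) (T : finType) (e : rel T) : 'M[R]_#|T| :=
  \matrix_(i, j) (e (enum_val i) (enum_val j))%:R.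

Definition spec_rad (R : realType) (T : finType) (e : rel T) : R :=
  sup [set l : R | eigenvalue (adj_mx R e) l].

From HB Require Import structures.
From mathcomp Require Import all_boot all_order all_algebra.
From mathcomp Require Import classical_sets boolp reals.
From mathcomp Require Import polyrcf ring lra zify.
Set Implicit Arguments. Unset Strict Implicit. Unset Printing Implicit Defensive.
Import Order.TTheory GRing.Theory Num.Theory.
Local Open Scope ring_scope.

(* By the equitable partition of K_k ∇ (K_2 ∪ K_m) into its three cliques, the
   block sums of an eigenvector for λ satisfy a 3×3 linear system; hence λ is
   -1, 1, m - 1 or a root of the characteristic polynomial of the quotient
   matrix.  That cubic is positive on [k + m, +oo) once
   2k(k + 1) < (k + m - 1)(k + m + 1), so every eigenvalue, and then the
   spectral radius, is below k + m = n - 2.  For both graphs of the theorem the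
   inequality follows from the assumed lower bound on n. *)

(* [0 < M] accounts for the junk value [sup set0 = 0]. *)
Lemma spec_rad_lt (R : realType) (T : finType) (e : rel T) (M : R) :
  0 < M -> (forall l, eigenvalue (adj_mx R e) l -> l < M) -> spec_rad R e < M.
Proof.
move=> M_gt0 eigM; set p := char_poly (adj_mx R e).
have p_neq0 : p != 0 := monic_neq0 (char_poly_monic _).
(* Eigenvalues are among the finitely many real roots of [p], so the largest of
   those below [M] bounds them all. *)
set c := \big[Num.max/0]_(x <- rootsR p | x < M) x.
have c_lt_M : c < M by rewrite /c; elim/big_ind: _ => // x y; rewrite gt_max => -> ->.
apply: le_lt_trans c_lt_M; rewrite /spec_rad.
have [eig_ne|eig_empty] :=
  pselect ([set l : R | eigenvalue (adj_mx R e) l] !=set0)%classic.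
  apply: ge_sup => // l /= eig_l; apply: le_bigmax_seq; last exact: eigM.
  by rewrite -roots_on_rootsR // -eigenvalue_root_char.
have -> : ([set l : R | eigenvalue (adj_mx R e) l] = set0)%classic.
  by apply/seteqP; split => // l eig_l; apply: eig_empty; exists l.
by rewrite sup0 bigmax_ge_id.
Qed.

Lemma gt1_of_lt_sqrB1 (R : realFieldType) (c s : R) :
  0 <= c -> 0 <= s -> c < (s - 1) * (s + 1) -> 1 < s.
Proof.
move=> c_ge0 s_ge0 hc; rewrite ltNge; apply/negP => s_le1.
have : (s - 1) * (s + 1) <= 0 by rewrite mulr_le0_ge0 //; lra.
lra.
Qed.

(* det((λ + 1) I - Q) for the quotient matrix Q = [[k-1, 2, m]; [k, 1, 0]; [k, 0, m-1]]
   of K_k ∇ (K_2 ∪ K_m). *)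
Definition join_K2_cubic (R : pzRingType) (k m l : R) : R :=
  (l + 1 - k) * (l - 1) * (l + 1 - m) - 2 * k * (l + 1 - m) - k * m * (l - 1).

Lemma join_K2_cubic_gt0 (R : realFieldType) (k m l : R) : 0 <= k -> 0 <= m ->
  2 * k * (k + 1) < (k + m - 1) * (k + m + 1) -> k + m <= l ->
  0 < join_K2_cubic k m l.
Proof.
move=> k_ge0 m_ge0 hkm l_ge.
have km_gt1 : 1 < k + m by apply: gt1_of_lt_sqrB1 hkm; nra.
set P := l - 1; set Q := l + 1 - m.
have -> : join_K2_cubic k m l = P * (Q - k) * (Q + m) - 2 * k * Q.
  by rewrite /join_K2_cubic /P /Q; ring.
have PQm_gt : 2 * k * (k + 1) < P * (Q + m).
  by apply: (lt_le_trans hkm); apply: ler_pM; rewrite /P /Q; lra.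
have Q_le : Q <= (Q - k) * (k + 1) by rewrite /Q; nra.
have PQm_ge0 : 0 <= P * (Q + m) by apply: mulr_ge0; rewrite /P /Q; lra.
have lt_Q : 2 * k * (k + 1) * Q < P * (Q + m) * Q by rewrite ltr_pM2r // /Q; lra.
rewrite subr_gt0 -(ltr_pM2r (_ : 0 < k + 1)); last lra.
rewrite mulrAC (_ : P * _ * _ * _ = P * (Q + m) * ((Q - k) * (k + 1))); last ring.
exact: lt_le_trans lt_Q (ler_wpM2l PQm_ge0 Q_le).
Qed.

Lemma adj_mx_eigenvectorE (R : realType) (T : finType) (e : rel T) (l : R)
    (v : 'rV[R]_#|T|) : v *m adj_mx R e = l *: v ->
  forall t, l * v 0 (enum_rank t) = \sum_s v 0 (enum_rank s) * (e s t)%:R.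
Proof.
move=> /matrixP eig_v t; move: (eig_v 0 (enum_rank t)); rewrite !mxE => <-.
rewrite (big_enum_val (A := T)) /=; apply: eq_bigr => i _.
by rewrite mxE enum_valK enum_rankK.
Qed.

Lemma sum_complete_graph (R : pzRingType) (m : nat) (f : 'I_m -> R) j :
  \sum_i f i * (complete_graph m i j)%:R = \sum_i f i - f j.
Proof.
rewrite [in RHS](bigD1 j) //= addrC addrK (bigD1 j) //= /complete_graph eqxx.
by rewrite mulr0 add0r; apply: eq_bigr => i ->; rewrite mulr1.
Qed.

Section JoinK2.
Variables (R : realType) (k m : nat).
Local Notation T := ('I_k + ('I_2 + 'I_m))%type.
Local Notation G :=
  (graph_join (complete_graph k) (graph_union (complete_graph 2) (complete_graph m))).

Definition closed_nbhd_sum (f : T -> R) (t : T) : R :=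
  let sk := \sum_i f (inl i) in
  let s2 := \sum_i f (inr (inl i)) in
  let sm := \sum_i f (inr (inr i)) in
  match t with
  | inl _ => sk + s2 + sm
  | inr (inl _) => sk + s2
  | inr (inr _) => sk + sm
  end.

Lemma join_K2_adj_sum (f : T -> R) t :
  \sum_s f s * (G s t)%:R = closed_nbhd_sum f t - f t.
Proof.
rewrite big_sumType /= big_sumType /=.
by case: t => [j|[j|j]] /=; rewrite sum_complete_graph -!mulr_suml ?mulr1 ?mulr0; ring.
Qed.

Lemma join_K2_eigenvalue (l : R) : eigenvalue (adj_mx R G) l ->
  [\/ l = -1, l = 1, l = m%:R - 1 | join_K2_cubic k%:R m%:R l = 0].
Proof.
case/eigenvalueP=> v /adj_mx_eigenvectorE eig_v v_neq0.
pose x t := v 0 (enum_rank t).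
have x_eq t : (l + 1) * x t = closed_nbhd_sum x t.
  by rewrite mulrDl mul1r eig_v join_K2_adj_sum subrK.
set sk := \sum_i x (inl i); set s2 := \sum_i x (inr (inl i)).
set sm := \sum_i x (inr (inr i)).
have block_eq p (g : 'I_p -> T) c : (forall i, closed_nbhd_sum x (g i) = c) ->
    (l + 1) * \sum_i x (g i) = p%:R * c.
  move=> gc; rewrite mulr_sumr (eq_bigr _ (fun i _ => x_eq (g i))).
  by rewrite (eq_bigr _ (fun i _ => gc i)) sumr_const card_ord mulr_natl.
have eq_k : (l + 1) * sk = k%:R * (sk + s2 + sm) by apply: block_eq.
have eq_2 : (l + 1) * s2 = 2 * (sk + s2) by apply: block_eq.
have eq_m : (l + 1) * sm = m%:R * (sk + sm) by apply: block_eq.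
have [sk0|sk_neq0] := eqVneq sk 0; last first.
  apply: Or44; apply: (mulIf sk_neq0); rewrite mul0r.
  have -> : join_K2_cubic k%:R m%:R l * sk =
      (l - 1) * (l + 1 - m%:R) * ((l + 1) * sk - k%:R * (sk + s2 + sm))
    + k%:R * (l + 1 - m%:R) * ((l + 1) * s2 - 2 * (sk + s2))
    + k%:R * (l - 1) * ((l + 1) * sm - m%:R * (sk + sm)) by rewrite /join_K2_cubic; ring.
  by rewrite eq_k eq_2 eq_m !subrr !mulr0 !addr0.
have [->|l_neq1] := eqVneq l 1; first exact: Or42.
have [->|l_neq_m1] := eqVneq l (m%:R - 1); first exact: Or43.
apply: Or41.
have s20 : s2 = 0.
  have : (l - 1) * s2 = (l + 1) * s2 - 2 * (sk + s2) by rewrite sk0; ring.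
  by rewrite eq_2 subrr => /eqP; rewrite mulf_eq0 subr_eq0 (negPf l_neq1) => /eqP.
have sm0 : sm = 0.
  have : (l + 1 - m%:R) * sm = (l + 1) * sm - m%:R * (sk + sm) by rewrite sk0; ring.
  rewrite eq_m subrr => /eqP; rewrite mulf_eq0 subr_eq0 => /orP[/eqP l1_eq_m|/eqP//].
  by case/eqP: l_neq_m1; rewrite -l1_eq_m addrK.
have nbhd0 t : closed_nbhd_sum x t = 0.
  by case: t => [?|[?|?]] /=; rewrite -/sk -/s2 -/sm sk0 ?s20 ?sm0 !addr0.
have [i vi_neq0] : exists i, v 0 i != 0.
  case/boolP: [exists i, v 0 i != 0] => [/existsP//|/existsPn v0].
  by case/eqP: v_neq0; apply/rowP => i; rewrite mxE; apply/eqP/negPn/v0.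
move: (x_eq (enum_val i)); rewrite nbhd0 /x enum_valK => /eqP.
by rewrite mulf_eq0 (negPf vi_neq0) orbF addr_eq0 => /eqP.
Qed.
End JoinK2.

Lemma spec_rad_join_K2_lt (R : realType) (k n : nat) : (k + 2 <= n)%N ->
  2 * (k%:R : R) * (k%:R + 1) < (n%:R - 3) * (n%:R - 1) ->
  spec_rad R (graph_join (complete_graph k)
                (graph_union (complete_graph 2) (complete_graph (n - k - 2))))
    < n%:R - 2.
Proof.
move=> kn cond; set m := (n - k - 2)%N.
have n_eq : (n%:R : R) = k%:R + m%:R + 2 by rewrite -!natrD; congr _%:R; lia.
have {}cond : 2 * (k%:R : R) * (k%:R + 1) < (k%:R + m%:R - 1) * (k%:R + m%:R + 1).
  by congr (_ < _ * _): cond; rewrite n_eq; ring.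
have km_gt1 : 1 < (k%:R : R) + m%:R.
  by apply: gt1_of_lt_sqrB1 cond; rewrite ?mulr_ge0 ?addr_ge0.
have k_ge0 : 0 <= (k%:R : R) := ler0n _ _.
rewrite n_eq addrK; apply: spec_rad_lt; first lra.
move=> l /join_K2_eigenvalue[->|->|->|cubic0]; try lra.
rewrite ltNge; apply/negP => l_ge; move: cubic0; apply/eqP.
by rewrite gt_eqF // join_K2_cubic_gt0.
Qed.

Theorem lemma2p3 (R : realType) (a b n k : nat)
  (ha : (0 < a)%N) (hb : (0 < b)%N) (hn : (0 < n)%N) (hab : (a <= b)%N)
  (hbn : (3 * b * (b + 1))%:R / a%:R + (3 * b + 7)%:R <= (n%:R : R))
  (hk : (k%:Z : int) = Num.ceil (((2 * b ^ 2 + 2 * b)%:R : R) / a%:R)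
                        + (2 * b)%:Z - 4) :
  spec_rad R (graph_join (complete_graph k)
                (graph_union (complete_graph 2) (complete_graph (n - k - 2))))
    < n%:R - 2
  /\
  spec_rad R (graph_join (complete_graph (4 * b))
                (graph_union (complete_graph 2) (complete_graph (n - 4 * b - 2))))
    < n%:R - 2.
Proof.
set A : R := a%:R; set B : R := b%:R; set r := B * (B + 1) / A.
have A_gt0 : 0 < A by rewrite ltr0n.
have B_ge1 : 1 <= B by rewrite ler1n.
have r_ge : B + 1 <= r.
  by rewrite ler_pdivlMr // [B * _]mulrC ler_wpM2l ?ler_nat //; lra.
have three_r : (3 * b * (b + 1))%:R / a%:R = 3 * r by rewrite /r /A /B !natrM natrD; ring.
have two_r : ((2 * b ^ 2 + 2 * b)%:R : R) / a%:R = 2 * r.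
  by rewrite /r /A /B natrD !natrM ?natrX; ring.
have n_ge : 3 * r + 3 * B + 7 <= n%:R by move: hbn; rewrite three_r natrD natrM; lra.
have k_lt : (k%:R : R) < 2 * r + 2 * B - 3.
  have ceil_eq : Num.ceil (2 * r) - 1 = k%:Z - (2 * b)%:Z + 3 by rewrite -two_r hk; ring.
  have intr_nat (j : nat) : (j%:Z)%:~R = j%:R :> R by [].
  by move: (ceilB1_lt (2 * r)); rewrite ceil_eq !(intrD, intrN) !intr_nat natrM; lra.
have k_ge0 : 0 <= (k%:R : R) := ler0n _ _.
split; apply: spec_rad_join_K2_lt; rewrite -?(ler_nat R) ?natrD ?natrM -/B; nra.
Qed.
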